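(* Let $\boldsymbol{x},\overline{\boldsymbol{x}}\in\mathbb{T}^3$ and $\boldsymbol{v}=(1,0,0)$, and let $\varepsilon>0$. For $\underline{\omega}=(\omega_1,\omega_2,\dots)$ with $\omega_i\in\Omega_0$ define $\boldsymbol{x}_0=\boldsymbol{x}$, $\boldsymbol{v}_0=\boldsymbol{v}$, $\boldsymbol{x}_n=f_{\omega_n}(\boldsymbol{x}_{n-1})$, $\boldsymbol{v}_n=\dfrac{D_{\boldsymbol{x}_{n-1}}f_{\omega_n}\boldsymbol{v}_{n-1}}{|D_{\boldsymbol{x}_{n-1}}f_{\omega_n}\boldsymbol{v}_{n-1}|}$. Then there exist $N_3\in\mathbb{N}$ and $\underline{\omega}^{N_3}=(\omega_1,\dots,\omega_{N_3})\in\Omega_0^{N_3}$ such that $$f_{\underline{\omega}^{N_3}}(\boldsymbol{x})=\overline{\boldsymbol{x}}\qquad\text{and}\qquad \boldsymbol{v}_{N_3}=(1,0,0).$$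
   Context: $\mathbb{T}^3=\mathbb{R}^3/(2\pi\mathbb{Z})^3$ with points $\boldsymbol{x}=(x,y,z)$. Fix $U>0$ and let $\Omega_0=[-U,U]^3\times[0,2\pi)^3$, with elements $\omega=(\mathsf{A},\mathsf{B},\mathsf{C},\alpha,\beta,\gamma)$. Define maps of $\mathbb{T}^3$: $f_{(\mathsf{A},\alpha)}(x,y,z)=(x+\mathsf{A}\sin(z+\alpha),\ y+\mathsf{A}\cos(z+\alpha),\ z)$, $f_{(\mathsf{B},\beta)}(x,y,z)=(x,\ y+\mathsf{B}\sin(x+\beta),\ z+\mathsf{B}\cos(x+\beta))$, $f_{(\mathsf{C},\gamma)}(x,y,z)=(x+\mathsf{C}\cos(y+\gamma),\ y,\ z+\mathsf{C}\sin(y+\gamma))$, and $f_\omega=f_{(\mathsf{C},\gamma)}\circ f_{(\mathsf{B},\beta)}\circ f_{(\mathsf{A},\alpha)}$. For $\underline{\omega}^N=(\omega_1,\dots,\omega_N)$, $f_{\underline{\omega}^N}=f_{\omega_N}\circ\cdots\circ f_{\omega_1}$; $D_{\boldsymbol{x}}f_\omega$ is the Jacobian of $f_\omega$ at $\boldsymbol{x}$. *)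

From Stdlib Require Import Reals List.
From Coquelicot Require Import Coquelicot.
Open Scope R_scope.

(* Points of R^3 (lifts of points of T^3) and tangent vectors. *)
Definition vec3 := (R * R * R)%type.

Definition get (p : vec3) (j : nat) : R :=
  let '(a, b, c) := p in
  match j with 0%nat => a | 1%nat => b | _ => c end.

Definition set (p : vec3) (j : nat) (t : R) : vec3 :=
  let '(a, b, c) := p in
  match j with 0%nat => (t, b, c) | 1%nat => (a, t, c) | _ => (a, b, t) end.

Definition torus_eq (p q : vec3) : Prop :=
  forall j : nat, (j < 3)%nat -> exists k : Z, get p j - get q j = 2 * PI * IZR k.

Record Omega := mkOmega { oA : R; oB : R; oC : R; oal : R; obe : R; oga : R }.

Definition in_Omega0 (U : R) (w : Omega) : Prop :=
  -U <= oA w <= U /\ -U <= oB w <= U /\ -U <= oC w <= U /\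
  0 <= oal w < 2 * PI /\ 0 <= obe w < 2 * PI /\ 0 <= oga w < 2 * PI.

Definition fA (A al : R) (p : vec3) : vec3 :=
  let '(x, y, z) := p in (x + A * sin (z + al), y + A * cos (z + al), z).
Definition fB (B be : R) (p : vec3) : vec3 :=
  let '(x, y, z) := p in (x, y + B * sin (x + be), z + B * cos (x + be)).
Definition fC (C ga : R) (p : vec3) : vec3 :=
  let '(x, y, z) := p in (x + C * cos (y + ga), y, z + C * sin (y + ga)).

Definition f_omega (w : Omega) (p : vec3) : vec3 :=
  fC (oC w) (oga w) (fB (oB w) (obe w) (fA (oA w) (oal w) p)).

(* f_{omega^N} = f_{omega_N} o ... o f_{omega_1}, with ws = [omega_1; ...; omega_N] *)
Definition f_seq (ws : list Omega) (p : vec3) : vec3 :=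
  fold_left (fun q w => f_omega w q) ws p.

Definition jac (f : vec3 -> vec3) (x : vec3) (i j : nat) : R :=
  Derive (fun t => get (f (set x j t)) i) (get x j).

Definition jac_apply (f : vec3 -> vec3) (x v : vec3) : vec3 :=
  (jac f x 0 0 * get v 0 + jac f x 0 1 * get v 1 + jac f x 0 2 * get v 2,
   jac f x 1 0 * get v 0 + jac f x 1 1 * get v 1 + jac f x 1 2 * get v 2,
   jac f x 2 0 * get v 0 + jac f x 2 1 * get v 1 + jac f x 2 2 * get v 2).

Definition norm3 (v : vec3) : R :=
  sqrt (get v 0 ^ 2 + get v 1 ^ 2 + get v 2 ^ 2).

Definition normalize (v : vec3) : vec3 :=
  let n := norm3 v in (get v 0 / n, get v 1 / n, get v 2 / n).

Definition step (xv : vec3 * vec3) (w : Omega) : vec3 * vec3 :=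
  (f_omega w (fst xv), normalize (jac_apply (f_omega w) (fst xv) (snd xv))).

Definition traj (ws : list Omega) (x v : vec3) : vec3 * vec3 :=
  fold_left step ws (x, v).

From Stdlib Require Import Reals List Lra Lia ZArith FunctionalExtensionality.
From Coquelicot Require Import Coquelicot.
Open Scope R_scope.

(* For [B = 0] the map [f_omega] is the composite of two shears, [f_(A,alpha)]
   (moving x and y by an amount depending on z) and [f_(C,gamma)] (moving x and
   z by an amount depending on y).  Choosing the phase so that one of [sin],
   [cos] vanishes, such a map translates a single coordinate by any prescribed
   amount in [[-U, U]]; finitely many of them therefore carry [x] exactly onto
   [xbar].  Since neither shear depends on the first
   coordinate, the Jacobian of every such map fixes [(1,0,0)], so [v_n = (1,0,0)]
   for all n. *)

Lemma sin_period_Z (x : R) (k : Z) : sin (x + 2 * IZR k * PI) = sin x.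
Proof.
  destruct (Z.le_ge_cases 0 k) as [Hk | Hk].
  - rewrite <- (Z2Nat.id k Hk), <- INR_IZR_INZ. apply sin_period.
  - rewrite <- (sin_period (x + 2 * IZR k * PI) (Z.to_nat (- k))).
    rewrite INR_IZR_INZ, Z2Nat.id, opp_IZR by lia.
    f_equal. ring.
Qed.

Lemma cos_period_Z (x : R) (k : Z) : cos (x + 2 * IZR k * PI) = cos x.
Proof.
  rewrite !cos_sin.
  replace (PI / 2 + (x + 2 * IZR k * PI)) with (PI / 2 + x + 2 * IZR k * PI) by ring.
  apply sin_period_Z.
Qed.

Lemma exists_phase (z s : R) :
  exists al, 0 <= al < 2 * PI /\ sin (z + al) = sin s /\ cos (z + al) = cos s.
Proof.
  pose proof PI_RGT_0.
  set (q := (s - z) / (2 * PI)).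
  destruct (floor_ex q) as [n Hn].
  assert (Hq : s - z = 2 * PI * q) by (unfold q; field; lra).
  exists (2 * PI * (q - IZR n)). split; [split; nra |].
  replace (z + 2 * PI * (q - IZR n)) with (s + 2 * IZR (- n) * PI)
    by (rewrite opp_IZR; lra).
  split; [apply sin_period_Z | apply cos_period_Z].
Qed.

Lemma Derive_translation (f : R -> R) (x : R) :
  (forall t, f t = t + f 0) -> Derive f x = 1.
Proof.
  intro Hf. rewrite (Derive_ext f (fun t => t + f 0) x Hf).
  apply is_derive_unique. auto_derive; trivial.
Qed.

Lemma Derive_constant (f : R -> R) (x : R) :
  (forall t, f t = f 0) -> Derive f x = 0.
Proof.
  intro Hf. rewrite (Derive_ext f (fun _ => f 0) x Hf). apply Derive_const.
Qed.

Lemma fB_0 (be : R) (p : vec3) : fB 0 be p = p.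
Proof.
  destruct p as [[x y] z]. unfold fB. rewrite !Rmult_0_l, !Rplus_0_r. reflexivity.
Qed.

Lemma f_omega_B0 (w : Omega) :
  oB w = 0 -> f_omega w = fun p => fC (oC w) (oga w) (fA (oA w) (oal w) p).
Proof.
  intro HB. extensionality p. unfold f_omega. rewrite HB, fB_0. reflexivity.
Qed.

Lemma jac_apply_e1_B0 (w : Omega) (p : vec3) :
  oB w = 0 -> jac_apply (f_omega w) p (1, 0, 0) = (1, 0, 0).
Proof.
  intro HB. rewrite (f_omega_B0 w HB).
  destruct w as [A B C al be ga], p as [[a b] c].
  unfold jac_apply, jac, fA, fC. simpl.
  rewrite !Rmult_0_r, !Rplus_0_r, !Rmult_1_r.
  rewrite Derive_translation, !Derive_constant by (intro t; ring).
  reflexivity.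
Qed.

Lemma normalize_e1 : normalize (1, 0, 0) = (1, 0, 0).
Proof.
  unfold normalize, norm3. simpl.
  replace (1 * (1 * 1) + 0 * (0 * 1) + 0 * (0 * 1)) with 1 by ring.
  rewrite sqrt_1. f_equal; [f_equal |]; field.
Qed.

Lemma traj_e1_B0 (ws : list Omega) (p : vec3) :
  List.Forall (fun w => oB w = 0) ws -> snd (traj ws p (1, 0, 0)) = (1, 0, 0).
Proof.
  revert p. induction ws as [| w ws IH]; intros p Hws; [reflexivity |].
  inversion Hws as [| ? ? HB Hws']; subst.
  change (traj (w :: ws) p (1, 0, 0))
    with (traj ws (f_omega w p) (normalize (jac_apply (f_omega w) p (1, 0, 0)))).
  rewrite jac_apply_e1_B0, normalize_e1 by exact HB.
  apply IH, Hws'.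
Qed.

Lemma get_set (p : vec3) (j : nat) (t : R) : get (set p j t) j = t.
Proof. destruct p as [[x y] z]; destruct j as [| [| j]]; reflexivity. Qed.

Lemma set_set (p : vec3) (j : nat) (t s : R) : set (set p j t) j s = set p j s.
Proof. destruct p as [[x y] z]; destruct j as [| [| j]]; reflexivity. Qed.

Lemma set_get (p : vec3) (j : nat) : set p j (get p j) = p.
Proof. destruct p as [[x y] z]; destruct j as [| [| j]]; reflexivity. Qed.

Lemma f_seq_app (ws1 ws2 : list Omega) (p : vec3) :
  f_seq (ws1 ++ ws2) p = f_seq ws2 (f_seq ws1 p).
Proof. apply fold_left_app. Qed.

Section Translations.

Variable U : R.
Hypothesis HU : 0 < U.

Definition B0_seq (ws : list Omega) : Prop :=
  List.Forall (in_Omega0 U) ws /\ List.Forall (fun w => oB w = 0) ws.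

Lemma B0_seq_app (ws1 ws2 : list Omega) :
  B0_seq ws1 -> B0_seq ws2 -> B0_seq (ws1 ++ ws2).
Proof. intros [H1 H1'] [H2 H2']. split; apply Forall_app; auto. Qed.

Lemma translation_step (p : vec3) (j : nat) (a : R) : -U <= a <= U ->
  exists w, in_Omega0 U w /\ oB w = 0 /\ f_omega w p = set p j (get p j + a).
Proof.
  intro Ha. pose proof PI_RGT_0.
  destruct p as [[x y] z].
  destruct j as [| [| j]].
  - destruct (exists_phase z (PI / 2)) as [al [Hal [Hs Hc]]].
    exists (mkOmega a 0 0 al 0 0).
    split; [unfold in_Omega0; simpl; lra | split; [reflexivity |]].
    unfold f_omega, fA, fB, fC; simpl.
    rewrite Hs, Hc, sin_PI2, cos_PI2. f_equal; [f_equal |]; ring.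
  - destruct (exists_phase z 0) as [al [Hal [Hs Hc]]].
    exists (mkOmega a 0 0 al 0 0).
    split; [unfold in_Omega0; simpl; lra | split; [reflexivity |]].
    unfold f_omega, fA, fB, fC; simpl.
    rewrite Hs, Hc, sin_0, cos_0. f_equal; [f_equal |]; ring.
  - destruct (exists_phase y (PI / 2)) as [ga [Hga [Hs Hc]]].
    exists (mkOmega 0 0 a 0 0 ga).
    split; [unfold in_Omega0; simpl; lra | split; [reflexivity |]].
    unfold f_omega, fA, fB, fC; simpl.
    rewrite !Rmult_0_l, !Rplus_0_r, Hs, Hc, sin_PI2, cos_PI2.
    f_equal; [f_equal |]; ring.
Qed.

Lemma translation_iter (n : nat) (p : vec3) (j : nat) (a : R) : -U <= a <= U ->
  exists ws, B0_seq ws /\ f_seq ws p = set p j (get p j + INR n * a).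
Proof.
  intro Ha. revert p. induction n as [| n IH]; intro p.
  - exists nil. split; [split; constructor |].
    simpl. rewrite Rmult_0_l, Rplus_0_r. symmetry. apply set_get.
  - destruct (translation_step p j a Ha) as [w [Hw [HB Hf]]].
    destruct (IH (set p j (get p j + a))) as [ws [[H1 H2] H3]].
    exists (w :: ws). split; [split; constructor; assumption |].
    change (f_seq (w :: ws) p) with (f_seq ws (f_omega w p)).
    rewrite Hf, H3, set_set, get_set, S_INR.
    f_equal. ring.
Qed.

Lemma translation_coord (p : vec3) (j : nat) (d : R) :
  exists ws, B0_seq ws /\ f_seq ws p = set p j d.
Proof.
  set (D := d - get p j).
  destruct (INR_archimed U (Rabs D) HU) as [n Hn].
  set (N := INR (S n)).
  assert (HN : N = INR n + 1) by apply S_INR.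
  pose proof (pos_INR n).
  assert (HDN : D < N * U /\ - (N * U) < D) by (apply Rabs_def2; nra).
  destruct (translation_iter (S n) p j (D / N)) as [ws [Hws Hf]].
  { split; apply (Rmult_le_reg_l N); try lra;
      replace (N * (D / N)) with D by (field; lra); lra. }
  exists ws. split; [exact Hws |].
  rewrite Hf. fold N. f_equal. unfold D. field. lra.
Qed.

Lemma translation_point (p q : vec3) :
  exists ws, B0_seq ws /\ f_seq ws p = q.
Proof.
  destruct (translation_coord p 0 (get q 0)) as [ws0 [H0 E0]].
  destruct (translation_coord (f_seq ws0 p) 1 (get q 1)) as [ws1 [H1 E1]].
  destruct (translation_coord (f_seq ws1 (f_seq ws0 p)) 2 (get q 2)) as [ws2 [H2 E2]].
  exists (ws0 ++ ws1 ++ ws2).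
  split; [apply B0_seq_app; [| apply B0_seq_app]; assumption |].
  rewrite !f_seq_app, E2, E1, E0.
  destruct p as [[x y] z], q as [[x' y'] z']. reflexivity.
Qed.

End Translations.

Lemma torus_eq_refl (p : vec3) : torus_eq p p.
Proof. intros j _. exists 0%Z. lra. Qed.

Theorem lemma3p4 (U : R) (HU : 0 < U) (x xbar : vec3) (eps : R) (Heps : 0 < eps) :
  exists (N3 : nat) (ws : list Omega),
    length ws = N3 /\ List.Forall (in_Omega0 U) ws /\
    torus_eq (f_seq ws x) xbar /\
    snd (traj ws x (1, 0, 0)) = (1, 0, 0).
Proof.
  destruct (translation_point U HU x xbar) as [ws [[Hin HB] Hf]].
  exists (length ws), ws.
  split; [reflexivity |].
  split; [exact Hin |].
  split.
  - rewrite Hf. apply torus_eq_refl.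
  - apply traj_e1_B0, HB.
Qed.
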